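(* Let $n \ge 1$ be an integer and let $k$ be an integer with $0 \le k \le \lfloor n/2 \rfloor$. Let $b_k \in B_{2n}$ be the $k$-th decreasing product component. Then the left and right derived braids of $b_k$ coincide: $L(b_k) = R(b_k)$ in $B_{3n}$.
   Context: $B_m$ denotes the Artin braid group on $m$ strands, with standard generators $\sigma_1,\dots,\sigma_{m-1}$ ($\sigma_i$ crosses the strands in positions $i$ and $i+1$; all generators are taken with the same crossing type). Braids are drawn top to bottom, and the product $xy$ means $x$ followed (below) by $y$. For braids $x\in B_a$, $y \in B_b$, $x\otimes y \in B_{a+b}$ denotes placing $y$ to the right of $x$; $\mathrm{id}_m$ is the trivial braid on $m$ strands. Cabling: given $y \in B_m$ and positive integers $w_1,\dots,w_m$ with $\sum w_i = N$, the cabled braid $y^{(w_1,\dots,w_m)} \in B_N$ is obtained by replacing the strand of $y$ starting at position $i$ (at the top) by a ribbon of $w_i$ parallel adjacent strands (a ''$w_i$-ribbon'') that follows that strand throughout. Derived braids: for $x \in B_{2n}$, the left derived braid is $Lx = (x\otimes \mathrm{id}_n)\cdot x^{(2,\dots,2,1,\dots,1)} \in B_{3n}$, where there are $n$ entries $2$ followed by $n$ entries $1$; i.e. one attaches $n$ identity strands on the right of $x$, then at the bottom of $x$ groups its $2n$ strands into $n$ consecutive pairs (2-ribbons), and braids the resulting $2n$ objects ($n$ 2-ribbons followed by $n$ single strands) according to $x$. The right derived braid is $Rx = (\mathrm{id}_n \otimes x)\cdot x^{(1,\dots,1,2,\dots,2)} \in B_{3n}$ ($n$ entries $1$ followed by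 $n$ entries $2$), i.e. the same construction with the $n$ identity strands attached on the left. (For $n=1$, $x=\sigma_1$, the equation $Lx=Rx$ is the Yang–Baxter equation $\sigma_1\sigma_2\sigma_1=\sigma_2\sigma_1\sigma_2$.) Decreasing product components in $B_{2n}$: $b_0 = \sigma_1^{(n,n)}$, the braid in which the $n$-ribbon of strands $1,\dots,n$ crosses the $n$-ribbon of strands $n+1,\dots,2n$; and for $1 \le k \le \lfloor n/2\rfloor$, $b_k = \sigma_2^{(k,\,n-k,\,n-k,\,k)}$, where $\sigma_2\in B_4$, i.e. with strands grouped into consecutive ribbons of widths $k, n-k, n-k, k$, the two middle $(n-k)$-ribbons cross once and the outer $k$-ribbons are identity. *)

From mathcomp Require Import all_boot.
Set Implicit Arguments. Unset Strict Implicit. Unset Printing Implicit Defensive.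

(* A braid word: letter (i, true) = sigma_i, (i, false) = sigma_i^{-1}
   (i is 1-based). Words are read left to right = top to bottom. *)
Definition letter := (nat * bool)%type.
Definition word := seq letter.

Inductive braid_rel (m : nat) : word -> word -> Prop :=
| br_cancel i s : 0 < i -> i < m -> braid_rel m [:: (i, s); (i, ~~ s)] [::]
| br_far i j : 0 < i -> j < m -> i.+1 < j ->
    braid_rel m [:: (i, true); (j, true)] [:: (j, true); (i, true)]
| br_yb i : 0 < i -> i.+1 < m ->
    braid_rel m [:: (i, true); (i.+1, true); (i, true)]
                [:: (i.+1, true); (i, true); (i.+1, true)].

Inductive braid_eq (m : nat) : word -> word -> Prop :=
| beq_rel x y u v : braid_rel m u v -> braid_eq m (x ++ u ++ y) (x ++ v ++ y)
| beq_refl u : braid_eq m u u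
| beq_sym u v : braid_eq m u v -> braid_eq m v u
| beq_trans u v w : braid_eq m u v -> braid_eq m v w -> braid_eq m u w.

Definition winv (w : word) : word := rev (map (fun l => (l.1, ~~ l.2)) w).

(* Positive crossing of an a-ribbon (positions p..p+a-1) over the b-ribbon
   immediately to its right; all a*b crossings are positive. *)
Definition ribbon (p a b : nat) : word :=
  flatten [seq [seq ((p + j + t)%N, true) | t <- iota 0 b] | j <- rev (iota 0 a)].

Definition swap_w (ws : seq nat) (i : nat) : seq nat :=
  set_nth 0 (set_nth 0 ws i.-1 (nth 0 ws i)) i (nth 0 ws i.-1).

(* Cabling: ws = current widths of the ribbons, listed by position. *)
Fixpoint cable_aux (ws : seq nat) (w : word) : word :=
  match w with
  | [::] => [::]
  | (i, s) :: w' =>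
      let p := (sumn (take i.-1 ws)).+1 in
      let a := nth 0 ws i.-1 in
      let b := nth 0 ws i in
      (if s then ribbon p a b else winv (ribbon p b a)) ++ cable_aux (swap_w ws i) w'
  end.

Definition cable (y : word) (ws : seq nat) : word := cable_aux ws y.

(* x (x) id : same word; id_n (x) x : indices shifted by n *)
Definition shift (n : nat) (x : word) : word := [seq ((l.1 + n)%N, l.2) | l <- x].

Definition Lder (n : nat) (x : word) : word := x ++ cable x (nseq n 2 ++ nseq n 1).
Definition Rder (n : nat) (x : word) : word := shift n x ++ cable x (nseq n 1 ++ nseq n 2).

Definition bcomp (n k : nat) : word :=
  if k == 0 then cable [:: (1, true)] [:: n; n]
  else cable [:: (2, true)] [:: k; (n - k)%N; (n - k)%N; k].

Example yb_check : Lder 1 (bcomp 1 0) = [:: (1,true); (2,true); (1,true)]. Proof. by []. Qed.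
Example yb_check2 : Rder 1 (bcomp 1 0) = [:: (2,true); (1,true); (2,true)]. Proof. by []. Qed.
Example rib_check : cable [:: (1,true)] [:: 2; 1] = [:: (2,true); (1,true)]. Proof. by []. Qed.

From Stdlib Require Import Setoid Morphisms.
From mathcomp Require Import all_boot zify.
Set Implicit Arguments. Unset Strict Implicit. Unset Printing Implicit Defensive.

(* With m = n - k, b_k is the crossing of two adjacent m-ribbons starting at
   strand k + 1, and cabling it again yields one ribbon crossing: L(b_k) is the
   crossing of m-ribbons at k + 1 followed by a 2m-ribbon over an m-ribbon at
   2k + 1, while R(b_k) is the crossing of m-ribbons at 2k + m + 1 followed by an
   m-ribbon over a 2m-ribbon at k + 1.  Splitting these ribbons into pieces of
   widths k and m - k, both sides become the same word up to commutations of
   far-apart factors and one ribbon Yang-Baxter move; the latter holds because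
   a positive braid on the strands of one ribbon slides through a ribbon
   crossing. *)

Lemma braid_eq_ctx M x y u v :
  braid_eq M u v -> braid_eq M (x ++ u ++ y) (x ++ v ++ y).
Proof.
elim=> {u v} [x' y' u v uv | u | u v _ vu | u v w _ uv _ vw].
- by move: (beq_rel (x ++ x') (y' ++ y) uv); rewrite -!catA.
- exact: beq_refl.
- exact: beq_sym vu.
- exact: beq_trans uv vw.
Qed.

Add Parametric Relation (M : nat) : word (braid_eq M)
  reflexivity proved by (@beq_refl M)
  symmetry proved by (@beq_sym M)
  transitivity proved by (@beq_trans M) as braid_eq_rel.

#[local] Hint Resolve beq_refl : core.

Add Parametric Morphism (M : nat) : (@cat letter)
  with signature braid_eq M ==> braid_eq M ==> braid_eq M as braid_eq_cat.
Proof.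
move=> u u' uu' v v' vv'; transitivity (u' ++ v).
  by have /= := braid_eq_ctx [::] v uu'.
by have := braid_eq_ctx u' [::] vv'; rewrite !cats0.
Qed.

Add Parametric Morphism (M : nat) (l : letter) : (cons l)
  with signature braid_eq M ==> braid_eq M as braid_eq_cons.
Proof. by move=> u v uv; apply: (braid_eq_cat_Proper (beq_refl M [:: l]) uv). Qed.

Definition positive_in (lo hi : nat) (w : word) :=
  all (fun l : letter => (lo <= l.1 <= hi) && l.2) w.

Lemma positive_in_cat lo hi u v :
  positive_in lo hi (u ++ v) = positive_in lo hi u && positive_in lo hi v.
Proof. exact: all_cat. Qed.

Definition strand_cross (r b : nat) : word := [seq ((r + t)%N, true) | t <- iota 0 b].

Lemma strand_crossD r b1 b2 :
  strand_cross r (b1 + b2) = strand_cross r b1 ++ strand_cross (r + b1) b2.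
Proof.
rewrite /strand_cross iotaD map_cat add0n; congr (_ ++ _).
by rewrite -{1}(addn0 b1) iotaDl -map_comp; apply: eq_map => t /=; rewrite addnA.
Qed.

Lemma strand_crossS r b : strand_cross r b.+1 = (r, true) :: strand_cross r.+1 b.
Proof. by rewrite -add1n strand_crossD /= addn0 addn1. Qed.

Lemma positive_in_strand_cross lo hi r b :
  lo <= r -> r + b <= hi.+1 -> positive_in lo hi (strand_cross r b).
Proof.
move=> lo_r rb_hi; apply/allP => l /mapP [t]; rewrite mem_iota => /andP [_ tb] -> /=.
rewrite andbT; apply/andP; split; lia.
Qed.

Lemma ribbonS p a b : ribbon p a.+1 b = strand_cross (p + a) b ++ ribbon p a b.
Proof. by rewrite /ribbon -addn1 iotaD rev_cat /= add0n. Qed.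

Lemma ribbon0r p a : ribbon p a 0 = [::].
Proof. by elim: a => [|a IHa] //; rewrite ribbonS IHa. Qed.

Lemma ribbonDl p a1 a2 b : ribbon p (a1 + a2) b = ribbon (p + a1) a2 b ++ ribbon p a1 b.
Proof. by elim: a2 => [|a2 IHa]; rewrite ?addn0 // addnS !ribbonS IHa catA addnA. Qed.

Lemma positive_in_ribbon lo hi p a b :
  lo <= p -> p + a + b <= hi.+2 -> positive_in lo hi (ribbon p a b).
Proof.
move=> lo_p; elim: a => [|a IHa] pab_hi //.
rewrite ribbonS positive_in_cat IHa ?andbT; last lia.
apply: positive_in_strand_cross; lia.
Qed.

Lemma shift_cat n u v : shift n (u ++ v) = shift n u ++ shift n v.
Proof. exact: map_cat. Qed.

Lemma shift_ribbon n p a b : shift n (ribbon p a b) = ribbon (p + n) a b.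
Proof.
elim: a => [|a IHa] //; rewrite !ribbonS shift_cat IHa; congr (_ ++ _).
rewrite /shift /strand_cross -map_comp; apply: eq_map => t /=; congr pair; lia.
Qed.

Section Braids.
Variable M : nat.
Local Notation beq := (braid_eq M).

Lemma braid_far i j : 0 < i -> i.+1 < j -> j < M -> forall w,
  beq [:: (i, true), (j, true) & w] [:: (j, true), (i, true) & w].
Proof. by move=> i_gt0 ij jM w; exact: (beq_rel [::] w (br_far i_gt0 jM ij)). Qed.

Lemma braid_yb i : 0 < i -> i.+1 < M -> forall w,
  beq [:: (i, true), (i.+1, true), (i, true) & w]
      [:: (i.+1, true), (i, true), (i.+1, true) & w].
Proof. by move=> i_gt0 iM w; exact: (beq_rel [::] w (br_yb i_gt0 iM)). Qed.

Lemma far_letter_comm i lo hi v w : 0 < i -> i.+1 < lo -> hi < M ->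
  positive_in lo hi v -> beq ((i, true) :: v ++ w) (v ++ (i, true) :: w).
Proof.
move=> i_gt0 i_lo hiM; elim: v => [|[j s] v IHv] //= /andP [/andP [/andP [lo_j j_hi] ->] v_pos].
by rewrite braid_far ?IHv //; lia.
Qed.

Lemma far_positive_comm u v lo1 hi1 lo2 hi2 :
  positive_in lo1 hi1 u -> positive_in lo2 hi2 v ->
  0 < lo1 -> hi1.+1 < lo2 -> hi2 < M -> beq (u ++ v) (v ++ u).
Proof.
move=> + v_pos lo1_gt0 hi1_lo2 hi2M; elim: u => [|[i s] u IHu] /=.
  by rewrite cats0.
case/andP=> /andP [/andP [lo_i i_hi] ->] u_pos.
have i_gt0 : 0 < i by lia.
by rewrite IHu // (far_letter_comm _ i_gt0 _ hi2M v_pos) //; lia.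
Qed.

Lemma strand_cross_slide q b i w : 0 < q -> q <= i -> i.+2 <= q + b -> q + b <= M ->
  beq ((i.+1, true) :: strand_cross q b ++ w) (strand_cross q b ++ (i, true) :: w).
Proof.
move=> q_gt0 q_i ib bM.
have -> : strand_cross q b =
    strand_cross q (i - q) ++ [:: (i, true), (i.+1, true) & strand_cross i.+2 (q + b - i.+2)].
  rewrite {1}(_ : b = i - q + (2 + (q + b - i.+2))); last lia.
  by rewrite !strand_crossD (subnKC q_i) /strand_cross /= addn0 addn1 addn2.
set S1 := strand_cross q _; set S2 := strand_cross i.+2 _.
have S1_pos : positive_in q i.-1 S1 by apply: positive_in_strand_cross; lia.
have S2_pos : positive_in i.+2 (q + b).-1 S2 by apply: positive_in_strand_cross; lia.
rewrite -!catA /= -(cat1s _ (S1 ++ _)) catA.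
rewrite -(far_positive_comm (u := S1) (v := [:: (i.+1, true)]) (lo1 := q) (hi1 := i.-1)
  (lo2 := i.+1) (hi2 := i.+1)) //=; try lia.
rewrite -catA /= -braid_yb; try lia.
by rewrite (far_letter_comm (v := S2) (lo := i.+2) (hi := (q + b).-1)) //; lia.
Qed.

Lemma ribbon_slide_letter p a b j w : 0 < p -> p <= j -> j.+2 <= p + b ->
  p + a + b <= M.+1 ->
  beq ((j + a, true) :: ribbon p a b ++ w) (ribbon p a b ++ (j, true) :: w).
Proof.
move=> p_gt0 p_j jb; elim: a => [|a IHa] abM; first by rewrite addn0.
rewrite ribbonS -catA addnS strand_cross_slide; try lia.
by rewrite IHa ?catA //; lia.
Qed.

Lemma ribbon_slide p a b w : 0 < p -> p + a + b <= M.+1 ->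
  positive_in p (p + b - 2) w -> beq (shift a w ++ ribbon p a b) (ribbon p a b ++ w).
Proof.
move=> p_gt0 abM; elim: w => [|[j s] w IHw] /=; first by rewrite cats0.
case/andP=> /andP [/andP [p_j j_b] ->] w_pos.
by rewrite IHw // ribbon_slide_letter //; lia.
Qed.

Lemma braid_ribbonDr p a b1 b2 : 0 < p -> p + a + b1 + b2 <= M.+1 ->
  beq (ribbon p a (b1 + b2)) (ribbon p a b1 ++ ribbon (p + b1) a b2).
Proof.
move=> p_gt0; elim: a => [|a IHa] abM //.
rewrite !ribbonS strand_crossD IHa; last lia.
rewrite (addnAC p b1 a) !catA -(catA _ (strand_cross _ b2)).
have [->|b1_gt0] := posnP b1; first by rewrite ribbon0r cats0.
rewrite -(far_positive_comm (u := ribbon p a b1) (v := strand_cross _ b2)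
  (lo1 := p) (hi1 := p + a + b1 - 2) (lo2 := p + a + b1) (hi2 := M.-1)) ?catA //;
  [apply: positive_in_ribbon | apply: positive_in_strand_cross | lia | lia]; lia.
Qed.

Lemma ribbon_yang_baxter q a b c : 0 < q -> q + a + b + c <= M.+1 ->
  beq (ribbon q a b ++ ribbon (q + b) a c ++ ribbon q b c)
      (ribbon (q + a) b c ++ ribbon q a c ++ ribbon (q + c) a b).
Proof.
move=> q_gt0 abcM.
rewrite -braid_ribbonDr ?catA -?braid_ribbonDr; try lia.
rewrite (addnC c) -(shift_ribbon a q b c) ribbon_slide //; first lia.
apply: positive_in_ribbon; lia.
Qed.

Lemma derived_ribbons_eq k m : 0 < m -> k <= m -> 3 * (k + m) <= M ->
  beq (ribbon k.+1 m m ++ ribbon (2 * k).+1 (2 * m) m)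
      (ribbon (2 * k + m).+1 m m ++ ribbon k.+1 m (2 * m)).
Proof.
move=> m_gt0 k_m kmM.
have splitl p a b a1 a2 p' : a = a1 + a2 -> p' = p + a1 ->
    ribbon p a b = ribbon p' a2 b ++ ribbon p a1 b.
  by move=> -> ->; apply: ribbonDl.
have splitr p a b b1 b2 p' : b = b1 + b2 -> p' = p + b1 -> 0 < p -> p + a + b <= M.+1 ->
    beq (ribbon p a b) (ribbon p a b1 ++ ribbon p' a b2).
  by move=> -> -> p_gt0 bM; apply: braid_ribbonDr => //; lia.
set q := (2 * k).+1.
set X1 := ribbon k.+1 m k; set X2 := ribbon q m (m - k); set D := ribbon (k + 2 * m).+1 k m.
set Y1 := ribbon (q + m) (m - k) m; set Y2 := ribbon q m m; set Y3 := ribbon (q + m) m (m - k).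
have X1_pos : positive_in k.+1 (2 * k + m - 1) X1 by apply: positive_in_ribbon; lia.
have X2_pos : positive_in q (k + 2 * m - 1) X2 by apply: positive_in_ribbon; lia.
have D_pos : positive_in (k + 2 * m).+1 M.-1 D by apply: positive_in_ribbon; lia.
have Y1_pos : positive_in (q + m) M.-1 Y1 by apply: positive_in_ribbon; lia.
(* Both sides equal this word: the left one after a single ribbon Yang-Baxter
   move, the right one by far commutations only. *)
transitivity (X1 ++ D ++ Y1 ++ Y2 ++ Y3).
  have -> : ribbon q (2 * m) m = D ++ ribbon (q + (m - k)) m m ++ ribbon q (m - k) m.
    rewrite (splitl q (2 * m) m (m - k) (k + m) (q + (m - k))); try lia.
    by rewrite (splitl (q + (m - k)) (k + m) m m k (k + 2 * m).+1) -?catA //; lia.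
  rewrite (splitr k.+1 m m k (m - k) q) -?catA; try lia.
  rewrite (catA X2) (far_positive_comm X2_pos D_pos) -?catA; try lia.
  by rewrite ribbon_yang_baxter //; lia.
symmetry; rewrite (splitl (2 * k + m).+1 m m (m - k) k (k + 2 * m).+1); try lia.
rewrite (splitr k.+1 m (2 * m) k (2 * m - k) q); try lia.
rewrite (splitr q m (2 * m - k) m (m - k) (q + m)) -/X1 -/D -/Y1 -/Y2 -/Y3; try lia.
rewrite -catA (catA Y1) -(far_positive_comm X1_pos Y1_pos); try lia.
by rewrite -catA (catA D) -(far_positive_comm X1_pos D_pos) -?catA //; lia.
Qed.

End Braids.

Definition cable_widths (ws : seq nat) (u : word) : seq nat :=
  foldl (fun ws l => swap_w ws l.1) ws u.

Lemma cable_aux_cat ws u v :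
  cable_aux ws (u ++ v) = cable_aux ws u ++ cable_aux (cable_widths ws u) v.
Proof. by elim: u ws => [|[i s] u IHu] ws //=; rewrite IHu catA. Qed.

Lemma swap_w_cat L x y R : swap_w (L ++ [:: x, y & R]) (size L).+1 = L ++ [:: y, x & R].
Proof.
elim: L => [|z L IHL] //; move: IHL; rewrite /swap_w /=.
by case: (size L) => [|s] /= ->.
Qed.

Lemma cable_widths_cons ws l u :
  cable_widths ws (l :: u) = cable_widths (swap_w ws l.1) u.
Proof. by []. Qed.

Lemma cable_aux_crossing L w v R :
  cable_aux (L ++ [:: w, v & R]) [:: ((size L).+1, true)] = ribbon (sumn L).+1 w v.
Proof.
rewrite /= take_size_cat // nth_cat ltnn subnn nth_cat ltnNge leqnSn.
by rewrite subSn // subnn cats0.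
Qed.

Lemma cable_widths_strand_cross L w V R :
  cable_widths (L ++ w :: V ++ R) (strand_cross (size L).+1 (size V)) = L ++ V ++ w :: R.
Proof.
elim: V L => [|v V IHV] L //.
by rewrite strand_crossS cable_widths_cons swap_w_cat -cat_rcons -(size_rcons L v) IHV cat_rcons.
Qed.

Lemma cable_strand_cross M L w V R : sumn L + w + sumn V <= M ->
  braid_eq M (cable_aux (L ++ w :: V ++ R) (strand_cross (size L).+1 (size V)))
             (ribbon (sumn L).+1 w (sumn V)).
Proof.
elim: V L => [|v V IHV] L LVM; first by rewrite ribbon0r.
rewrite strand_crossS -(cat1s ((size L).+1, true)) cable_aux_cat cable_aux_crossing.
rewrite cable_widths_cons swap_w_cat -cat_rcons -(size_rcons L v) IHV.
  by rewrite sumn_rcons -addSn -braid_ribbonDr //; move: LVM => /=; lia.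
by move: LVM; rewrite sumn_rcons /=; lia.
Qed.

Lemma cable_ribbon M L W V R : sumn L + sumn W + sumn V <= M ->
  braid_eq M (cable (ribbon (size L).+1 (size W) (size V)) (L ++ W ++ V ++ R))
             (ribbon (sumn L).+1 (sumn W) (sumn V)).
Proof.
elim/last_ind: W R => [|W w IHW] R LWVM //.
rewrite /cable size_rcons ribbonS cable_aux_cat addSn -size_cat.
rewrite cat_rcons catA cable_widths_strand_cross cable_strand_cross -?catA; last first.
  by move: LWVM; rewrite sumn_cat sumn_rcons; lia.
rewrite -/(cable _ _) IHW; last by move: LWVM; rewrite sumn_rcons; lia.
by rewrite sumn_rcons ribbonDl sumn_cat addSn.
Qed.

Lemma cable_ribbon_nseq M l a b x y z R : x * l + y * a + z * b <= M ->
  braid_eq M (cable (ribbon l.+1 a b) (nseq l x ++ nseq a y ++ nseq b z ++ R))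
             (ribbon (x * l).+1 (y * a) (z * b)).
Proof.
move=> lab_M; have := cable_ribbon R (L := nseq l x) (W := nseq a y) (V := nseq b z).
by rewrite !size_nseq !sumn_nseq; apply.
Qed.

Lemma bcompE n k : bcomp n k = ribbon k.+1 (n - k) (n - k).
Proof. by rewrite /bcomp; case: k => [|k] /=; rewrite ?cats0 ?subn0 ?addn0. Qed.

Theorem proposition1 (n k : nat) :
  1 <= n -> k <= n./2 ->
  braid_eq (3 * n) (Lder n (bcomp n k)) (Rder n (bcomp n k)).
Proof.
move=> n_gt0 k_le_half; set m := n - k.
have n_km : n = k + m by rewrite subnKC //; lia.
have nseq_split x y : nseq n x ++ nseq n y = nseq k x ++ nseq m x ++ nseq m y ++ nseq k y.
  by rewrite n_km nseqD (addnC k) nseqD -!catA.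
rewrite /Lder /Rder bcompE -/m shift_ribbon !nseq_split.
rewrite !cable_ribbon_nseq ?mul1n; try lia.
have -> : k.+1 + n = (2 * k + m).+1 by lia.
apply: derived_ribbons_eq; lia.
Qed.
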